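(* Let $A$ be a fuzzy ideal in a fuzzy Riesz space $(E,\mu)$, and let $E/A$ carry the quotient fuzzy order described in the context. The following are equivalent: (1) $E/A$ is a fuzzy Archimedean space; (2) $A$ is uniformly fuzzy closed; (3) whenever $\{x_n\}\subseteq A$ with $\mu(0,x_n)>\frac12$ for all $n$, the sequence $\{x_n\}$ is increasing and converges relatively uniformly in fuzzy order to $x\in E$, then $x\in A$; (4) whenever $x,w\in E^+$ and $(nx-w)^+\in A$ for all $n=1,2,\dots$, then $x\in A$.
   Context: A fuzzy order on a real vector space $E$ is a map $\mu:E\times E\to[0,1]$ with $\mu(x,x)=1$; $\mu(x,y)+\mu(y,x)>1$ implies $x=y$; and $\mu(x,z)\ge\sup_{y}\min(\mu(x,y),\mu(y,z))$. Write $x\le y$ for $\mu(x,y)>\frac12$; upper bounds, suprema and infima are taken with respect to this relation. $(E,\mu)$ is a fuzzy ordered linear space if $\mu(x_1,x_2)>\frac12$ implies $\mu(x_1,x_2)\le\mu(x_1+x,x_2+x)$ for all $x$ and $\mu(x_1,x_2)\le\mu(\alpha x_1,\alpha x_2)$ for all $\alpha>0$; it is a fuzzy Riesz space if $x\vee y=\sup\{x,y\}$ and $x\wedge y=\inf\{x,y\}$ exist for all $x,y$. $E^+=\{x:0\le x\}$, $x^+=x\vee0$, $|x|=x\vee(-x)$. A fuzzy ideal is a vector subspace $A$ such that $\mu(|x|,|y|)>\frac12$ and $y\in A$ imply $x\in A$. For $f\in E$, $[f]=f+A$; on the quotient vector space $E/A$ put $\nu([f],[g])=1$ if $[f]=[g]$,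 $\nu([f],[g])=\frac23$ if $[f]\neq[g]$ and there exist $f_1\in[f]$, $g_1\in[g]$ with $\mu(f_1,g_1)>\frac12$, and $\nu([f],[g])=0$ otherwise; $(E/A,\nu)$ is a fuzzy Riesz space. A fuzzy ordered vector space (in which every pair of elements has an upper bound) is fuzzy Archimedean if for every nonzero $x$ with $0\le x$ the set $\{\lambda x:\lambda>0\}$ is not bounded above. A sequence $\{x_n\}$ converges relatively uniformly in fuzzy order to $x$ if there is $w\in E^+$ such that for every $\varepsilon>0$ there is $n(\varepsilon)$ with $\mu(|x-x_n|,\varepsilon w)>\frac12$ for all $n>n(\varepsilon)$. A set $A$ is uniformly fuzzy closed if it contains the limit of every sequence in $A$ converging relatively uniformly in fuzzy order. *)

From HB Require Import structures.
From mathcomp Require Import all_boot all_order all_algebra.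
From mathcomp Require Import boolp classical_sets reals.
Set Implicit Arguments. Unset Strict Implicit. Unset Printing Implicit Defensive.
Import Order.TTheory GRing.Theory Num.Theory.
Local Open Scope ring_scope.
Local Open Scope classical_set_scope.

Section FuzzyDefs.
Variables (R : realType) (E : lmodType R).
Implicit Types (mu : E -> E -> R) (A : set E).

(* mu is a fuzzy order: values in [0,1]; mu(x,x)=1;
   mu(x,y)+mu(y,x)>1 -> x=y; mu(x,z) >= sup_y min(mu(x,y),mu(y,z))
   (the sup-inequality written as "for every y"). *)
Definition fuzzy_order mu : Prop :=
  [/\ forall x y, 0 <= mu x y <= 1,
      forall x, mu x x = 1,
      forall x y, mu x y + mu y x > 1 -> x = y &
      forall x y z, Num.min (mu x y) (mu y z) <= mu x z].

Definition fle mu x y : Prop := mu x y > 2^-1.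

Definition is_fsup mu (S : set E) (s : E) : Prop :=
  (forall a, S a -> fle mu a s) /\
  (forall u, (forall a, S a -> fle mu a u) -> fle mu s u).

Definition is_finf mu (S : set E) (s : E) : Prop :=
  (forall a, S a -> fle mu s a) /\
  (forall u, (forall a, S a -> fle mu u a) -> fle mu u s).

Definition fuzzy_ordered_linear mu : Prop :=
  fuzzy_order mu /\
  (forall x1 x2, fle mu x1 x2 ->
     (forall x, mu x1 x2 <= mu (x1 + x) (x2 + x)) /\
     (forall a : R, 0 < a -> mu x1 x2 <= mu (a *: x1) (a *: x2))).

Definition fuzzy_riesz mu : Prop :=
  fuzzy_ordered_linear mu /\
  (forall x y, (exists s, is_fsup mu [set x; y] s) /\
               (exists i, is_finf mu [set x; y] i)).

(* x \/ y, x^+ = x \/ 0, |x| = x \/ (-x)  (the sup is unique, chosen by xget) *)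
Definition fjoin mu x y : E := xget 0 (is_fsup mu [set x; y]).
Definition fpos mu x : E := fjoin mu x 0.
Definition fabs mu x : E := fjoin mu x (- x).

Definition vsubspace A : Prop :=
  [/\ A 0, forall x y, A x -> A y -> A (x + y) &
      forall (a : R) x, A x -> A (a *: x)].

Definition fuzzy_ideal mu A : Prop :=
  vsubspace A /\
  (forall x y, fle mu (fabs mu x) (fabs mu y) -> A y -> A x).

(* The quotient fuzzy order nu on E/A, written on representatives:
   nu([f],[g]) = 1 if [f]=[g]; 2/3 if [f]<>[g] and there are f1 in [f],
   g1 in [g] with mu(f1,g1) > 1/2; 0 otherwise. *)
Definition quot_mu mu A (f g : E) : R :=
  if `[< A (f - g) >] then 1
  else if `[< exists f1 g1, A (f1 - f) /\ A (g1 - g) /\ fle mu f1 g1 >]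
       then 2 / 3 else 0.

(* Fuzzy Archimedean property for a fuzzy order nu on a vector space whose
   equality is eqv (eqv = (=) for E itself, eqv = congruence mod A for E/A):
   for every nonzero x with 0 <= x, {lambda x : lambda > 0} has no upper bound. *)
Definition fuzzy_archimedean_wrt (eqv : E -> E -> Prop) (nu : E -> E -> R) : Prop :=
  forall x, ~ eqv x 0 -> fle nu 0 x ->
    ~ (exists u, forall l : R, 0 < l -> fle nu (l *: x) u).

Definition quot_fuzzy_archimedean mu A : Prop :=
  fuzzy_archimedean_wrt (fun f g => A (f - g)) (quot_mu mu A).

Definition ru_conv mu (xs : nat -> E) (x : E) : Prop :=
  exists w, fle mu 0 w /\
    forall eps : R, 0 < eps -> exists N : nat, forall n : nat, (N < n)%N ->
      fle mu (fabs mu (x - xs n)) (eps *: w).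

Definition uniformly_fuzzy_closed mu A : Prop :=
  forall (xs : nat -> E) (x : E), (forall n, A (xs n)) -> ru_conv mu xs x -> A x.

End FuzzyDefs.

From HB Require Import structures.
From mathcomp Require Import all_boot all_order all_algebra.
From mathcomp Require Import boolp classical_sets reals.
From mathcomp Require Import lra.
Set Implicit Arguments. Unset Strict Implicit. Unset Printing Implicit Defensive.
Import Order.TTheory GRing.Theory Num.Theory.
Local Open Scope ring_scope.

(* On the quotient, [f] <= [g] iff f <= g + c for some c in A.
   (1) -> (2): if x_n -> x relatively uniformly with regulator w, then for
   every l > 0 and large n we get l|x| <= w + l|x_n| with l|x_n| in A, so the
   multiples of [|x|] are bounded by [w] and Archimedeanity forces |x| in A.
   (2) -> (3) is trivial.
   (3) -> (4): (x - w/(n+1))^+ = (1/(n+1)) ((n+1)x - w)^+ is an increasing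
   sequence in A squeezed between x - w/(n+1) and x, hence it converges
   relatively uniformly to x.
   (4) -> (1): if [0] <= [x] and [l x] <= [u] for all l > 0, then y = x + c0
   is positive for some c0 in A, and each (n y - |u|)^+ is dominated by an
   element of A; so y, and hence x, lies in A. *)

Section FuzzyRieszSpace.
Variables (R : realType) (E : lmodType R) (mu : E -> E -> R).
Local Notation "x <=f y" := (fle mu x y) (at level 70).

Section FuzzyOrder.
Hypothesis mu_order : fuzzy_order mu.

Lemma fle_refl x : x <=f x.
Proof. by case: mu_order => _ mu_xx _ _; rewrite /fle mu_xx; lra. Qed.

Lemma fle_trans y x z : x <=f y -> y <=f z -> x <=f z.
Proof.
case: mu_order => _ _ _ mu_min le_xy le_yz.
by apply: lt_le_trans (mu_min x y z); rewrite lt_min le_xy le_yz.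
Qed.

Lemma fle_anti x y : x <=f y -> y <=f x -> x = y.
Proof. by case: mu_order => _ _ mu_anti _; rewrite /fle => ? ?; apply: mu_anti; lra. Qed.

End FuzzyOrder.

Section FuzzyOrderedLinear.
Hypothesis mu_lin : fuzzy_ordered_linear mu.

Lemma fleDr z x y : x <=f y -> x + z <=f y + z.
Proof.
move=> le_xy; have [/(_ z) mu_le _] := proj2 mu_lin x y le_xy.
exact: lt_le_trans le_xy mu_le.
Qed.

Lemma fleZ a x y : 0 < a -> x <=f y -> a *: x <=f a *: y.
Proof.
move=> a_gt0 le_xy; have [_ /(_ a a_gt0) mu_le] := proj2 mu_lin x y le_xy.
exact: lt_le_trans le_xy mu_le.
Qed.

Lemma flepZ2 a x y : 0 < a -> (a *: x <=f a *: y) <-> (x <=f y).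
Proof.
move=> a_gt0; split; last exact: fleZ.
have aV_gt0 : 0 < a^-1 by rewrite invr_gt0.
by move=> /(fleZ aV_gt0); rewrite !scalerA mulVf ?gt_eqF // !scale1r.
Qed.

Lemma fleBlDr x y z : (x - y <=f z) <-> (x <=f z + y).
Proof. by split => [/(fleDr y)|/(fleDr (- y))]; rewrite ?subrK ?addrK. Qed.

Lemma fle_subr_ge0 x y : (0 <=f y - x) <-> (x <=f y).
Proof. by split => [/(fleDr x)|/(fleDr (- x))]; rewrite ?add0r ?subrK ?subrr. Qed.

Lemma fleD a b c d : a <=f b -> c <=f d -> a + c <=f b + d.
Proof.
move=> le_ab le_cd; apply: (fle_trans (proj1 mu_lin) (fleDr c le_ab)).
by rewrite ![b + _]addrC; apply: fleDr.
Qed.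

Lemma fleN2 x y : x <=f y -> - y <=f - x.
Proof. by move=> /fle_subr_ge0 le_xy; apply/fle_subr_ge0; rewrite opprK addrC. Qed.

Lemma fle0Z a x : 0 <= a -> 0 <=f x -> 0 <=f a *: x.
Proof.
rewrite le0r => /orP[/eqP ->|a_gt0].
  by rewrite scale0r => _; exact: (fle_refl (proj1 mu_lin)).
by move=> /(fleZ a_gt0); rewrite scaler0.
Qed.

Lemma fleZr a b w : a <= b -> 0 <=f w -> a *: w <=f b *: w.
Proof.
move=> le_ab w_ge0; apply/fle_subr_ge0; rewrite -scalerBl.
by apply: fle0Z; rewrite ?subr_ge0.
Qed.

End FuzzyOrderedLinear.

Section FuzzyRiesz.
Hypothesis mu_riesz : fuzzy_riesz mu.
Let mu_lin : fuzzy_ordered_linear mu := proj1 mu_riesz.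
Let mu_order : fuzzy_order mu := proj1 mu_lin.

Lemma fjoinP x y : is_fsup mu [set x; y] (fjoin mu x y).
Proof.
by have [[s s_sup] _] := proj2 mu_riesz x y; apply: (xgetPex 0 (ex_intro _ s s_sup)).
Qed.

Lemma fjoin_ubl x y : x <=f fjoin mu x y.
Proof. by apply: (fjoinP x y).1; left. Qed.

Lemma fjoin_ubr x y : y <=f fjoin mu x y.
Proof. by apply: (fjoinP x y).1; right. Qed.

Lemma fjoin_lub x y u : x <=f u -> y <=f u -> fjoin mu x y <=f u.
Proof. by move=> le_xu le_yu; apply: (fjoinP x y).2 => a [->|->]. Qed.

Lemma fabs_ge0 x : 0 <=f fabs mu x.
Proof.
have := fleD mu_lin (fjoin_ubl x (- x)) (fjoin_ubr x (- x)).
rewrite subrr -mulr2n -scaler_nat => two_abs_ge0.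
by apply/(flepZ2 mu_lin _ _ (ltr0Sn _ 1)); rewrite scaler0.
Qed.

Lemma fabs_id z : 0 <=f z -> fabs mu z = z.
Proof.
move=> z_ge0; apply: (fle_anti mu_order _ (fjoin_ubl _ _)).
apply: fjoin_lub; first exact: fle_refl.
by apply: (fle_trans mu_order _ z_ge0); rewrite -oppr0; apply: fleN2.
Qed.

Lemma fle_absD x y : fabs mu (x + y) <=f fabs mu x + fabs mu y.
Proof.
apply: fjoin_lub; first exact: fleD (fjoin_ubl _ _) (fjoin_ubl _ _).
by rewrite opprD; apply: fleD (fjoin_ubr _ _) (fjoin_ubr _ _).
Qed.

Lemma fpos_le y z : y <=f z -> fpos mu y <=f fpos mu z.
Proof.
move=> le_yz; apply: fjoin_lub (fjoin_ubr _ _).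
exact: (fle_trans mu_order le_yz (fjoin_ubl _ _)).
Qed.

Lemma fpos_le_abs z d : z <=f d -> fpos mu z <=f fabs mu d.
Proof.
move=> le_zd; apply: fjoin_lub (fabs_ge0 d).
exact: (fle_trans mu_order le_zd (fjoin_ubl _ _)).
Qed.

Lemma fposZ a y : 0 < a -> fpos mu (a *: y) = a *: fpos mu y.
Proof.
move=> a_gt0; have aV_gt0 : 0 < a^-1 by rewrite invr_gt0.
apply: (fle_anti mu_order).
  apply: fjoin_lub; first exact: fleZ (fjoin_ubl _ _).
  by apply: fle0Z (ltW a_gt0) (fjoin_ubr _ _).
rewrite -[fpos mu (a *: y)](scalerKV (lt0r_neq0 a_gt0)) flepZ2 //.
apply: fjoin_lub; last exact: fle0Z (ltW aV_gt0) (fjoin_ubr _ _).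
by rewrite -[y in y <=f _](scalerK (lt0r_neq0 a_gt0)); apply: fleZ (fjoin_ubl _ _).
Qed.

End FuzzyRiesz.
End FuzzyRieszSpace.

Section Subspace.
Variables (R : realType) (E : lmodType R) (A : set E).
Hypothesis A_sub : vsubspace A.

Lemma vsub0 : A 0.
Proof. by case: A_sub. Qed.

Lemma vsubD x y : A x -> A y -> A (x + y).
Proof. by case: A_sub => _ + _; apply. Qed.

Lemma vsubZ a x : A x -> A (a *: x).
Proof. by case: A_sub => _ _; apply. Qed.

Lemma vsubN x : A x -> A (- x).
Proof. by rewrite -scaleN1r; apply: vsubZ. Qed.

Lemma vsubB x y : A x -> A y -> A (x - y).
Proof. by move=> Ax Ay; apply/vsubD/vsubN. Qed.

End Subspace.

Section Quotient.
Variables (R : realType) (E : lmodType R) (mu : E -> E -> R) (A : set E).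
Hypotheses (mu_lin : fuzzy_ordered_linear mu) (A_sub : vsubspace A).

Lemma quot_fleP f g :
  fle (quot_mu mu A) f g <-> exists2 c, A c & fle mu f (g + c).
Proof.
rewrite /fle /quot_mu; split.
- case: asboolP => [Afg _|_].
    by exists (f - g); rewrite // addrC subrK; exact: (fle_refl (proj1 mu_lin)).
  case: asboolP => [[f1 [g1 [Af1 [Ag1 le_fg1]]]] _|_]; last lra.
  exists ((g1 - g) - (f1 - f)); first exact: vsubB.
  suff -> : g + (g1 - g - (f1 - f)) = g1 + (f - f1).
    by have := fleDr mu_lin (f - f1) le_fg1; rewrite addrC subrK.
  by rewrite opprB addrA subrKC.
- move=> [c Ac le_fgc]; case: asboolP => _; first lra.
  case: asboolP => [_|[]]; first lra.
  exists f, (g + c); rewrite subrr addrAC subrr add0r.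
  by split; [exact: vsub0 | split].
Qed.

End Quotient.

Section IdealCriteria.
Variables (R : realType) (E : lmodType R) (mu : E -> E -> R) (A : set E).
Local Notation "x <=f y" := (fle mu x y) (at level 70).

Definition increasing_uniformly_closed : Prop :=
  forall (xs : nat -> E) (x : E), (forall n, A (xs n)) -> (forall n, 0 <=f xs n) ->
    (forall m n, (m <= n)%N -> xs m <=f xs n) -> ru_conv mu xs x -> A x.

Definition pos_part_closed : Prop :=
  forall x w : E, 0 <=f x -> 0 <=f w ->
    (forall n : nat, (1 <= n)%N -> A (fpos mu (n%:R *: x - w))) -> A x.

Hypotheses (mu_riesz : fuzzy_riesz mu) (A_ideal : fuzzy_ideal mu A).
Let mu_lin : fuzzy_ordered_linear mu := proj1 mu_riesz.
Let mu_order : fuzzy_order mu := proj1 mu_lin.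
Let A_sub : vsubspace A := proj1 A_ideal.

Lemma ideal_absE x : A (fabs mu x) <-> A x.
Proof.
by split; apply: (proj2 A_ideal); rewrite (fabs_id mu_riesz (fabs_ge0 mu_riesz x));
  apply: fle_refl.
Qed.

Lemma ideal_fpos_le z d : A d -> z <=f d -> A (fpos mu z).
Proof.
move=> Ad le_zd; apply: (proj2 A_ideal _ d) Ad.
by rewrite (fabs_id mu_riesz (fjoin_ubr mu_riesz _ _)); apply: fpos_le_abs.
Qed.

Lemma ru_conv_squeeze xs x w : 0 <=f w ->
  (forall n, x - (n.+1%:R)^-1 *: w <=f xs n) -> (forall n, xs n <=f x) ->
  ru_conv mu xs x.
Proof.
move=> w_ge0 xs_ge xs_le; exists w; split => // eps eps_gt0.
exists (Num.bound eps^-1) => n lt_bound_n.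
have c_le_eps : (n.+1%:R : R)^-1 <= eps.
  rewrite -[leRHS]invrK lef_pV2 ?posrE ?invr_gt0 ?ltr0Sn //.
  apply/ltW/(lt_le_trans (archi_boundP _)); first by rewrite invr_ge0 ltW.
  by rewrite ler_nat leqW // ltnW.
apply: (fle_trans mu_order _ (fleZr mu_lin c_le_eps w_ge0)).
apply: (fjoin_lub mu_riesz).
  by apply/(fleBlDr mu_lin); rewrite addrC; apply/(fleBlDr mu_lin).
rewrite opprB; apply: (fle_trans mu_order _ (fle0Z mu_lin _ w_ge0)).
  by have := fleDr mu_lin (- x) (xs_le n); rewrite subrr.
by rewrite invr_ge0.
Qed.

Lemma quot_archimedean_uniformly_closed :
  quot_fuzzy_archimedean mu A -> uniformly_fuzzy_closed mu A.
Proof.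
move=> arch xs x A_xs [w [w_ge0 conv_w]].
apply/ideal_absE; apply: contrapT => nA_abs.
apply: (arch (fabs mu x)); first by rewrite subr0.
  apply/(quot_fleP mu_lin A_sub); exists 0; first exact: vsub0.
  by rewrite addr0; apply: fabs_ge0.
exists w => l l_gt0; apply/(quot_fleP mu_lin A_sub).
have lV_gt0 : 0 < l^-1 by rewrite invr_gt0.
have [N conv_N] := conv_w l^-1 lV_gt0.
exists (l *: fabs mu (xs N.+1)); first exact/(vsubZ A_sub)/ideal_absE.
rewrite -[w](scalerKV (lt0r_neq0 l_gt0)) -scalerDr; apply: (fleZ mu_lin l_gt0).
have := fle_absD mu_riesz (x - xs N.+1) (xs N.+1); rewrite subrK => tri.
exact: (fle_trans mu_order tri (fleDr mu_lin _ (conv_N _ (ltnSn N)))).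
Qed.

Lemma increasing_closed_pos_part_closed :
  increasing_uniformly_closed -> pos_part_closed.
Proof.
move=> A_closed x w x_ge0 w_ge0 A_pos.
pose c n := (n.+1%:R : R)^-1.
have c_gt0 n : 0 < c n by rewrite invr_gt0 ltr0Sn.
have xsE n : fpos mu (x - c n *: w) = c n *: fpos mu (n.+1%:R *: x - w).
  rewrite -fposZ // scalerBr scalerA mulVf ?scale1r //.
  exact: lt0r_neq0 (ltr0Sn _ _).
apply: (A_closed (fun n => fpos mu (x - c n *: w))).
- by move=> n; rewrite xsE; apply/(vsubZ A_sub)/A_pos.
- by move=> n; apply: fjoin_ubr.
- move=> m n le_mn; apply: (fpos_le mu_riesz).
  apply: (fleD mu_lin (fle_refl mu_order x)); apply: (fleN2 mu_lin).
  by apply: (fleZr mu_lin _ w_ge0); rewrite lef_pV2 ?posrE ?ltr0Sn // ler_nat.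
- apply: (ru_conv_squeeze w_ge0) => n; first exact: fjoin_ubl.
  apply: (fjoin_lub mu_riesz _ x_ge0); apply/(fleBlDr mu_lin).
  rewrite -[x in x <=f _]addr0; apply: (fleD mu_lin (fle_refl mu_order x)).
  exact: (fle0Z mu_lin (ltW (c_gt0 n)) w_ge0).
Qed.

Lemma pos_part_closed_quot_archimedean :
  pos_part_closed -> quot_fuzzy_archimedean mu A.
Proof.
move=> A_closed x nAx /(quot_fleP mu_lin A_sub)[c0 Ac0 y_ge0] [u le_u].
apply: nAx; rewrite subr0.
suff A_y : A (x + c0) by rewrite -(addrK c0 x); apply: vsubB.
apply: (A_closed _ (fabs mu u) y_ge0 (fabs_ge0 mu_riesz u)) => n n_ge1.
have n_gt0 : (0 : R) < n%:R by rewrite ltr0n.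
have /(quot_fleP mu_lin A_sub)[c Ac le_nx] := le_u n%:R n_gt0.
apply: (ideal_fpos_le (d := c + n%:R *: c0)).
  by apply: (vsubD A_sub Ac); apply: vsubZ.
apply/(fleBlDr mu_lin); rewrite scalerDr.
apply: (fle_trans mu_order (fleDr mu_lin _ le_nx)).
by rewrite -addrA [X in _ <=f X]addrC; apply/(fleDr mu_lin)/fjoin_ubl.
Qed.

End IdealCriteria.

Theorem theorem3p8 (R : realType) (E : lmodType R) (mu : E -> E -> R) (A : set E) :
  fuzzy_riesz mu -> fuzzy_ideal mu A ->
  [<-> quot_fuzzy_archimedean mu A;
       uniformly_fuzzy_closed mu A;
       forall (xs : nat -> E) (x : E),
         (forall n, A (xs n)) ->
         (forall n, mu 0 (xs n) > 2^-1) ->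
         (forall m n, (m <= n)%N -> fle mu (xs m) (xs n)) ->
         ru_conv mu xs x -> A x;
       forall x w : E, fle mu 0 x -> fle mu 0 w ->
         (forall n : nat, (1 <= n)%N -> A (fpos mu (n%:R *: x - w))) -> A x].
Proof.
move=> mu_riesz A_ideal; tfae.
- exact: quot_archimedean_uniformly_closed.
- by move=> A_closed xs x A_xs _ _; apply: A_closed.
- exact: increasing_closed_pos_part_closed.
- exact: pos_part_closed_quot_archimedean.
Qed.
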